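(* Let $h$ be the two-dimensional Euclid's hat. Define the minimal specific energy $$e(h)=\inf_{n\ge2}\ \inf_{(\zeta_1,\dots,\zeta_n)}\frac{1}{n}U_n(\zeta_1,\dots,\zeta_n;h)$$ and the constrained (modified) minimal specific energy $$\bar e(h)=\inf_{n\ge2}\ \inf_{\substack{(\zeta_1,\dots,\zeta_n)\\ \sigma_1+\dots+\sigma_n\neq0}}\frac{1}{n-1}U_n(\zeta_1,\dots,\zeta_n;h),$$ the inner infima running over all $\zeta_j=(\sigma_j,x_j)\in\{-1,1\}\times\mathbb{R}^2$. Then $e(h)=\bar e(h)=-1/2$. The value $-1/2$ is attained for $e$ by any configuration with $n$ even, $\sum_j\sigma_j=0$ and all $x_j$ equal, and for $\bar e$ by any configuration with $n$ odd, $|\sum_j\sigma_j|=1$ and all $x_j$ equal.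
   Context: The Euclid's hat is $h:[0,\infty)\to[0,1]$, $h(w)=\frac{2}{\pi}(\arccos w-w\sqrt{1-w^2})$ for $0\le w\le1$ and $h(w)=0$ for $w>1$. For $\zeta_j=(\sigma_j,x_j)\in\{-1,1\}\times\mathbb{R}^2$, $U_n(\zeta_1,\dots,\zeta_n;h)=\sum_{1\le i<j\le n}\sigma_i\sigma_j h(|x_i-x_j|)$. *)

From Stdlib Require Import Reals Lra.
Open Scope R_scope.

(* Euclid's hat on [0,oo): h(w) = 2/PI (acos w - w sqrt(1-w^2)) for 0<=w<=1, 0 for w>1.
   (Only applied to distances, which are >= 0.) *)
Definition euclid_hat (w : R) : R :=
  if Rle_dec w 1 then 2 / PI * (acos w - w * sqrt (1 - w ^ 2)) else 0.

Definition dist2 (p q : R * R) : R :=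
  sqrt ((fst p - fst q) ^ 2 + (snd p - snd q) ^ 2).

Fixpoint sumR (n : nat) (f : nat -> R) : R :=
  match n with
  | O => 0
  | S k => sumR k f + f k
  end.

Definition U (h : R -> R) (n : nat) (sigma : nat -> R) (x : nat -> R * R) : R :=
  sumR n (fun j => sumR j (fun i => sigma i * sigma j * h (dist2 (x i) (x j)))).

Definition spins (n : nat) (sigma : nat -> R) : Prop :=
  forall i, (i < n)%nat -> sigma i = 1 \/ sigma i = -1.

Definition is_inf (S : R -> Prop) (m : R) : Prop :=
  (forall y, S y -> m <= y) /\
  (forall m', (forall y, S y -> m' <= y) -> m' <= m).

Definition energy_set (h : R -> R) (y : R) : Prop :=
  exists n sigma x, (2 <= n)%nat /\ spins n sigma /\ y = U h n sigma x / INR n.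

Definition mod_energy_set (h : R -> R) (y : R) : Prop :=
  exists n sigma x, (2 <= n)%nat /\ spins n sigma /\ sumR n sigma <> 0 /\
    y = U h n sigma x / (INR n - 1).

From Stdlib Require Import Reals Lra Lia.
From Coquelicot Require Import Coquelicot.
Open Scope R_scope.

(* Let [B_i] be the disk of diameter 1 centred at [x_i]; the area of [B_i ∩ B_j] is
   [(π/4) h(|x_i - x_j|)].  For the integer-valued [F = Σ σ_i 1_{B_i}] this gives
   [(π/4) Σ_{i,j} σ_i σ_j h(|x_i - x_j|) = ∫ F^2 ≥ |∫ F| = (π/4) |Σ σ_i|], i.e.
   [2 U_n + n ≥ |Σ σ_i|], and [|Σ σ_i| ≥ 1] when the sum does not vanish; coincident
   configurations attain equality.  The inequality [∫ F^2 ≥ ∫ F] is proved on each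
   vertical line, where the disks cut out intervals, by counting points of a fine
   lattice; the area of [B_i ∩ B_j] is computed by differentiating it with respect
   to the distance of the centres. *)

Lemma sumR_ext n f g : (forall i, (i < n)%nat -> f i = g i) -> sumR n f = sumR n g.
Proof.
  induction n as [|n IH]; intros H; simpl; [reflexivity|].
  rewrite IH, H; [reflexivity|lia|intros; apply H; lia].
Qed.

Lemma sumR_plus n f g : sumR n (fun i => f i + g i) = sumR n f + sumR n g.
Proof. induction n as [|n IH]; simpl; [|rewrite IH]; ring. Qed.

Lemma sumR_minus n f g : sumR n (fun i => f i - g i) = sumR n f - sumR n g.
Proof. induction n as [|n IH]; simpl; [|rewrite IH]; ring. Qed.

Lemma sumR_opp n f : sumR n (fun i => - f i) = - sumR n f.
Proof. induction n as [|n IH]; simpl; [|rewrite IH]; ring. Qed.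

Lemma sumR_scal n c f : sumR n (fun i => c * f i) = c * sumR n f.
Proof. induction n as [|n IH]; simpl; [|rewrite IH]; ring. Qed.

Lemma sumR_const n c : sumR n (fun _ => c) = INR n * c.
Proof. induction n as [|n IH]; simpl sumR; [simpl|rewrite IH, S_INR]; ring. Qed.

Lemma sumR_le n f g : (forall i, (i < n)%nat -> f i <= g i) -> sumR n f <= sumR n g.
Proof.
  induction n as [|n IH]; intros H; simpl; [lra|].
  apply Rplus_le_compat; [apply IH; intros; apply H|apply H]; lia.
Qed.

Lemma sumR_nonneg n f : (forall i, (i < n)%nat -> 0 <= f i) -> 0 <= sumR n f.
Proof.
  intros H. replace 0 with (sumR n (fun _ => 0)) by (rewrite sumR_const; ring).
  now apply sumR_le.
Qed.

Lemma sumR_term_le n f i :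
  (forall j, (j < n)%nat -> 0 <= f j) -> (i < n)%nat -> f i <= sumR n f.
Proof.
  induction n as [|n IH]; intros H Hi; simpl; [lia|].
  destruct (Nat.eq_dec i n) as [->|Hne].
  - pose proof (sumR_nonneg n f ltac:(intros; apply H; lia)). lra.
  - pose proof (IH ltac:(intros; apply H; lia) ltac:(lia)). pose proof (H n ltac:(lia)). lra.
Qed.

Lemma sumR_swap n m (f : nat -> nat -> R) :
  sumR n (fun i => sumR m (fun j => f i j)) = sumR m (fun j => sumR n (fun i => f i j)).
Proof.
  induction n as [|n IH]; simpl.
  - rewrite sumR_const. simpl. ring.
  - rewrite IH, <- sumR_plus. reflexivity.
Qed.

Lemma sumR_mult_sumR n f g :
  sumR n f * sumR n g = sumR n (fun i => sumR n (fun j => f i * g j)).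
Proof.
  rewrite Rmult_comm, <- sumR_scal. apply sumR_ext; intros i _.
  rewrite Rmult_comm, <- sumR_scal. apply sumR_ext; intros; ring.
Qed.

Lemma sumR_square_sym n (a : nat -> nat -> R) : (forall i j, a i j = a j i) ->
  sumR n (fun i => sumR n (fun j => a i j)) =
  2 * sumR n (fun j => sumR j (fun i => a i j)) + sumR n (fun i => a i i).
Proof.
  intros Hsym. induction n as [|n IH]; simpl; [ring|].
  rewrite sumR_plus, IH, (sumR_ext n (fun j => a n j) (fun i => a i n)) by (intros; apply Hsym).
  ring.
Qed.

Lemma sumR_IZR n f : (forall i, (i < n)%nat -> exists z, f i = IZR z) ->
  exists z, sumR n f = IZR z.
Proof.
  induction n as [|n IH]; intros H; simpl.
  - now exists 0%Z.
  - destruct IH as [z1 ->]; [intros; apply H; lia|].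
    destruct (H n ltac:(lia)) as [z2 ->].
    exists (z1 + z2)%Z. now rewrite plus_IZR.
Qed.

Lemma spins_opp n s : spins n s -> spins n (fun i => - s i).
Proof. intros H i Hi. destruct (H i Hi) as [-> | ->]; [right|left]; ring. Qed.

Lemma spins_mult n s i j : spins n s -> (i < n)%nat -> (j < n)%nat ->
  s i * s j = 1 \/ s i * s j = -1.
Proof. intros H Hi Hj. destruct (H i Hi) as [-> | ->], (H j Hj) as [-> | ->]; lra. Qed.

Lemma spins_sumR_IZR n s : spins n s -> exists z, sumR n s = IZR z.
Proof.
  intros H. apply sumR_IZR. intros i Hi.
  destruct (H i Hi) as [-> | ->]; [exists 1%Z|exists (-1)%Z]; reflexivity.
Qed.

(** * Signed lengths of intervals *)

Lemma Rabs_le_inv a b : Rabs a <= b -> - b <= a <= b.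
Proof. unfold Rabs; destruct Rcase_abs; lra. Qed.

Definition step (a x : R) : R := if Rle_dec a x then 1 else 0.

Definition box (a b x : R) : R := step a x * step x b.

Definition len (a b : R) : R := Rmax 0 (b - a).

Definition overlap (a1 b1 a2 b2 : R) : R := len (Rmax a1 a2) (Rmin b1 b2).

Definition count_at_least (a : R) (K : nat) : R := sumR (S K) (fun k => step a (INR k)).

Definition count_above (b : R) (K : nat) : R := sumR (S K) (fun k => 1 - step (INR k) b).

Definition lattice_count (a b : R) (K : nat) : R := sumR (S K) (fun k => box a b (INR k)).

Lemma count_at_least_bounds a K : 0 <= a ->
  len a (INR K) <= count_at_least a K <= len a (INR K + 1).
Proof.
  intros Ha. unfold count_at_least, len, step. induction K as [|K IH].
  - simpl. unfold Rmax. repeat destruct Rle_dec; lra.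
  - change (sumR (S (S K)) ?f) with (sumR (S K) f + f (S K)). cbv beta.
    rewrite S_INR in *. pose proof (pos_INR K). revert IH.
    unfold Rmax. repeat destruct Rle_dec; lra.
Qed.

Lemma count_above_bounds b K : 0 <= b ->
  len b (INR K) <= count_above b K <= len b (INR K + 1).
Proof.
  intros Hb. unfold count_above, len, step. induction K as [|K IH].
  - simpl. unfold Rmax. repeat destruct Rle_dec; lra.
  - change (sumR (S (S K)) ?f) with (sumR (S K) f + f (S K)). cbv beta.
    rewrite S_INR in *. pose proof (pos_INR K). revert IH.
    unfold Rmax. repeat destruct Rle_dec; lra.
Qed.

(* For [a <= b], the points of [[a, b]] are those [>= a] minus those [> b]. *)
Lemma lattice_count_approx a b K : 0 <= a -> b <= INR K ->
  Rabs (lattice_count a b K - len a b) <= 1.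
Proof.
  intros Ha Hb. destruct (Rle_dec a b) as [Hab|Hab].
  - replace (lattice_count a b K) with (count_at_least a K - count_above b K).
    + generalize (count_at_least_bounds a K Ha) (count_above_bounds b K ltac:(lra)).
      unfold len, Rmax. repeat destruct Rle_dec; intros; apply Rabs_le; lra.
    + unfold lattice_count, count_at_least, count_above. rewrite <- sumR_minus.
      apply sumR_ext; intros k _. unfold box, step. repeat destruct Rle_dec; lra.
  - unfold lattice_count. rewrite (sumR_ext _ _ (fun _ => 0)), sumR_const.
    + unfold len, Rmax. destruct Rle_dec; apply Rabs_le; lra.
    + intros k _. unfold box, step. repeat destruct Rle_dec; lra.
Qed.

Lemma box_mult a b a' b' x : box a b x * box a' b' x = box (Rmax a a') (Rmin b b') x.
Proof. unfold box, step, Rmax, Rmin. repeat destruct Rle_dec; lra. Qed.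

(* Both sides are [Σ_k F k] and [Σ_k F k ^ 2], with [F k] the integer defined below. *)
Lemma signed_count_le_overlap_count n s a b K : spins n s ->
  sumR n (fun i => s i * lattice_count (a i) (b i) K) <=
  sumR n (fun i => sumR n (fun j =>
    s i * s j * lattice_count (Rmax (a i) (a j)) (Rmin (b i) (b j)) K)).
Proof.
  intros Hs. set (F k := sumR n (fun i => s i * box (a i) (b i) (INR k))).
  transitivity (sumR (S K) F).
  { right. unfold F, lattice_count. rewrite sumR_swap.
    apply sumR_ext; intros i _. symmetry. apply sumR_scal. }
  transitivity (sumR (S K) (fun k => F k * F k)).
  - apply sumR_le; intros k _.
    destruct (sumR_IZR n (fun i => s i * box (a i) (b i) (INR k))) as [z Hz].
    + intros i Hi. unfold box, step.
      destruct (Hs i Hi) as [-> | ->]; repeat destruct Rle_dec;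
        first [exists 0%Z; simpl; lra | exists 1%Z; simpl; lra | exists (-1)%Z; simpl; lra].
    + unfold F. rewrite Hz, <- mult_IZR. apply IZR_le. nia.
  - right. unfold F. rewrite (sumR_ext _ _ (fun k => sumR n (fun i => sumR n (fun j =>
      s i * box (a i) (b i) (INR k) * (s j * box (a j) (b j) (INR k))))))
      by (intros; apply sumR_mult_sumR).
    rewrite sumR_swap. apply sumR_ext; intros i _. rewrite sumR_swap.
    apply sumR_ext; intros j _. unfold lattice_count. rewrite <- sumR_scal.
    apply sumR_ext; intros k _. rewrite <- box_mult. ring.
Qed.

Lemma sign_mult_le e u v : (e = 1 \/ e = -1) -> Rabs (u - v) <= 1 -> e * u <= e * v + 1.
Proof. intros [-> | ->] H; apply Rabs_le_inv in H; lra. Qed.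

Lemma signed_length_le_overlap_approx n s a b K : spins n s ->
  (forall i, (i < n)%nat -> 0 <= a i /\ b i <= INR K) ->
  sumR n (fun i => s i * len (a i) (b i)) <=
  sumR n (fun i => sumR n (fun j => s i * s j * overlap (a i) (b i) (a j) (b j)))
    + (INR n + INR n * INR n).
Proof.
  intros Hs Hab.
  pose proof (signed_count_le_overlap_count n s a b K Hs) as Hc.
  assert (Hlen : sumR n (fun i => s i * len (a i) (b i)) <=
                 sumR n (fun i => s i * lattice_count (a i) (b i) K) + INR n).
  { rewrite <- (Rmult_1_r (INR n)), <- sumR_const, <- sumR_plus.
    apply sumR_le; intros i Hi.
    apply sign_mult_le; [apply Hs; exact Hi|].
    rewrite Rabs_minus_sym. destruct (Hab i Hi). apply lattice_count_approx; lra. }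
  assert (Hov : sumR n (fun i => sumR n (fun j =>
      s i * s j * lattice_count (Rmax (a i) (a j)) (Rmin (b i) (b j)) K)) <=
    sumR n (fun i => sumR n (fun j => s i * s j * overlap (a i) (b i) (a j) (b j)))
      + INR n * INR n).
  { replace (INR n * INR n) with (sumR n (fun _ => sumR n (fun _ => 1)))
      by (rewrite !sumR_const; ring).
    rewrite <- sumR_plus. apply sumR_le; intros i Hi. rewrite <- sumR_plus.
    apply sumR_le; intros j Hj. apply sign_mult_le; [now apply (spins_mult n)|].
    destruct (Hab i Hi), (Hab j Hj). apply lattice_count_approx.
    - unfold Rmax; destruct Rle_dec; lra.
    - unfold Rmin; destruct Rle_dec; lra. }
  lra.
Qed.

Lemma len_affine N c a b : 0 < N -> len (N * (a + c)) (N * (b + c)) = N * len a b.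
Proof. intros HN. unfold len, Rmax. repeat destruct Rle_dec; nra. Qed.

Lemma overlap_affine N c a1 b1 a2 b2 : 0 < N ->
  overlap (N * (a1 + c)) (N * (b1 + c)) (N * (a2 + c)) (N * (b2 + c)) =
  N * overlap a1 b1 a2 b2.
Proof.
  intros HN. unfold overlap. rewrite <- (len_affine N c) by exact HN. f_equal.
  - unfold Rmax. repeat destruct Rle_dec; nra.
  - unfold Rmin. repeat destruct Rle_dec; nra.
Qed.

Lemma le_of_scaled_le x y C : (forall N, 0 < N -> N * x <= N * y + C) -> x <= y.
Proof.
  intros H. destruct (Rle_lt_dec x y) as [|Hlt]; [assumption|exfalso].
  set (N := (Rabs C + 1) / (x - y)).
  assert (HN : 0 < N) by (unfold N; pose proof (Rabs_pos C); apply Rdiv_lt_0_compat; lra).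
  assert (E : N * (x - y) = Rabs C + 1) by (unfold N; field; lra).
  specialize (H N HN). pose proof (Rle_abs C). nra.
Qed.

(* After rescaling by [N], lattice counts give the lengths up to an error [n + n^2]
   independent of [N]. *)
Lemma signed_length_le_overlap n s a b : spins n s ->
  sumR n (fun i => s i * len (a i) (b i)) <=
  sumR n (fun i => sumR n (fun j => s i * s j * overlap (a i) (b i) (a j) (b j))).
Proof.
  intros Hs. set (B := sumR n (fun i => Rabs (a i) + Rabs (b i))).
  assert (HB : forall i, (i < n)%nat -> Rabs (a i) + Rabs (b i) <= B).
  { intros i Hi. apply (sumR_term_le n (fun i => Rabs (a i) + Rabs (b i))); [|exact Hi].
    intros j _. pose proof (Rabs_pos (a j)). pose proof (Rabs_pos (b j)). lra. }
  apply (le_of_scaled_le _ _ (INR n + INR n * INR n)). intros N HN.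
  destruct (INR_unbounded (2 * B * N)) as [K HK].
  pose proof (signed_length_le_overlap_approx n s
    (fun i => N * (a i + B)) (fun i => N * (b i + B)) K Hs) as H.
  rewrite <- !sumR_scal.
  rewrite (sumR_ext _ _ (fun i => s i * len (N * (a i + B)) (N * (b i + B)))).
  - rewrite (sumR_ext _ (fun i => N * _) (fun i => sumR n (fun j =>
      s i * s j * overlap (N * (a i + B)) (N * (b i + B)) (N * (a j + B)) (N * (b j + B))))).
    + apply H. intros i Hi. specialize (HB i Hi).
      pose proof (Rle_abs (a i)). pose proof (Rle_abs (- a i)). rewrite Rabs_Ropp in *.
      pose proof (Rle_abs (b i)). pose proof (Rabs_pos (a i)). pose proof (Rabs_pos (b i)). split.
      * apply Rmult_le_pos; lra.
      * apply Rle_trans with (N * (2 * B)); [apply Rmult_le_compat_l|]; lra.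
    + intros i _. rewrite <- sumR_scal. apply sumR_ext; intros j _.
      rewrite overlap_affine by exact HN. ring.
  - intros i _. rewrite len_affine by exact HN. ring.
Qed.

(** * Chords of two disks *)

Definition centered_overlap (r1 r2 q : R) : R :=
  Rmax 0 (r1 + r2 - Rmax (Rabs (r1 - r2)) (Rabs q)).

Lemma overlap_centered c1 r1 c2 r2 : 0 <= r1 -> 0 <= r2 ->
  overlap (c1 - r1) (c1 + r1) (c2 - r2) (c2 + r2) = centered_overlap r1 r2 (c2 - c1).
Proof.
  intros. unfold overlap, len, centered_overlap, Rmin, Rmax, Rabs.
  repeat (destruct Rle_dec || destruct Rcase_abs); lra.
Qed.

Lemma centered_overlap_abs r1 r2 q : centered_overlap r1 r2 (Rabs q) = centered_overlap r1 r2 q.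
Proof. unfold centered_overlap. now rewrite Rabs_Rabsolu. Qed.

Lemma centered_overlap_lipschitz r1 r2 q1 q2 :
  Rabs (centered_overlap r1 r2 q1 - centered_overlap r1 r2 q2) <= Rabs (q1 - q2).
Proof.
  unfold centered_overlap, Rmax, Rabs. repeat (destruct Rle_dec || destruct Rcase_abs); lra.
Qed.

Lemma centered_overlap_0_l r2 q : 0 <= r2 -> centered_overlap 0 r2 q = 0.
Proof.
  intros. unfold centered_overlap, Rmax, Rabs. repeat (destruct Rle_dec || destruct Rcase_abs); lra.
Qed.

Lemma centered_overlap_pos r1 r2 q : 0 <= r1 -> 0 <= r2 -> 0 < centered_overlap r1 r2 q ->
  exists y, - r1 < y < r1 /\ q - r2 < y < q + r2.
Proof.
  intros H1 H2 Hpos. exists ((Rmax (- r1) (q - r2) + Rmin r1 (q + r2)) / 2).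
  revert Hpos. unfold centered_overlap, Rmin, Rmax, Rabs.
  repeat (destruct Rle_dec || destruct Rcase_abs); lra.
Qed.

Definition partial_overlap (r1 r2 q : R) : Prop := Rabs (r1 - r2) < q < r1 + r2.

Lemma centered_overlap_decr r1 r2 q1 q2 : 0 <= q1 <= q2 ->
  0 <= centered_overlap r1 r2 q1 - centered_overlap r1 r2 q2 <= q2 - q1.
Proof.
  intros. unfold centered_overlap, Rmax, Rabs. repeat (destruct Rle_dec || destruct Rcase_abs); lra.
Qed.

Lemma centered_overlap_diff_partial r1 r2 q1 q2 : 0 <= q1 <= q2 ->
  partial_overlap r1 r2 q1 -> partial_overlap r1 r2 q2 ->
  centered_overlap r1 r2 q1 - centered_overlap r1 r2 q2 = q2 - q1.
Proof.
  unfold partial_overlap. intros.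
  unfold centered_overlap, Rmax, Rabs in *. repeat (destruct Rle_dec || destruct Rcase_abs); lra.
Qed.

Lemma centered_overlap_diff_pos r1 r2 q1 q2 : 0 <= r1 -> 0 <= r2 -> 0 <= q1 <= q2 ->
  0 < centered_overlap r1 r2 q1 - centered_overlap r1 r2 q2 ->
  exists q, q1 < q < q2 /\ partial_overlap r1 r2 q.
Proof.
  intros H1 H2 Hq Hpos. exists ((Rmax (Rabs (r1 - r2)) q1 + Rmin (r1 + r2) q2) / 2).
  unfold partial_overlap. revert Hpos.
  unfold centered_overlap, Rmax, Rmin, Rabs. repeat (destruct Rle_dec || destruct Rcase_abs); lra.
Qed.

Lemma partial_overlap_iff r1 r2 q : 0 <= r1 -> 0 <= r2 -> 0 < q ->
  partial_overlap r1 r2 q <-> (q*q - r1*r1 - r2*r2) ^ 2 < 4 * (r1*r1) * (r2*r2).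
Proof.
  intros H1 H2 Hq. unfold partial_overlap.
  replace (4 * (r1*r1) * (r2*r2)) with ((2*r1*r2) ^ 2) by ring.
  split.
  - intros [Hlo Hhi]. apply Rabs_def2 in Hlo.
    assert ((r1 - r2) * (r1 - r2) < q * q) by nra.
    assert (q * q < (r1 + r2) * (r1 + r2)) by nra.
    nra.
  - intros Hsq.
    assert (Habs : Rabs (q*q - r1*r1 - r2*r2) < 2*r1*r2).
    { rewrite <- (Rabs_right (2*r1*r2)) by nra. apply Rsqr_lt_abs_0. unfold Rsqr. nra. }
    apply Rabs_def2 in Habs.
    split; [apply Rabs_def1|]; nra.
Qed.

Definition half_chord (t : R) : R := sqrt (/4 - t * t).

Definition chord_overlap (p q t : R) : R :=
  centered_overlap (half_chord t) (half_chord (t - p)) q.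

Definition lens_rate (p q : R) : R :=
  q * sqrt (1 - (p*p + q*q)) / (2 * sqrt (p*p + q*q)).

Lemma half_chord_nonneg t : 0 <= half_chord t.
Proof. apply sqrt_pos. Qed.

Lemma half_chord_sq t : 0 <= /4 - t * t -> half_chord t * half_chord t = /4 - t * t.
Proof. apply sqrt_sqrt. Qed.

Lemma half_chord_pos t : 0 < half_chord t -> 0 < /4 - t * t.
Proof.
  intros H. destruct (Rle_lt_dec (/4 - t * t) 0) as [Hle|]; [|assumption].
  unfold half_chord in H. rewrite sqrt_neg_0 in H; lra.
Qed.

Lemma heron_pos X u v : 0 <= X -> (X - u - v) ^ 2 < 4 * u * v -> 0 < u /\ 0 < v.
Proof.
  intros HX H. assert (Huv : 0 < u * v) by (pose proof (pow2_ge_0 (X - u - v)); lra).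
  destruct (Rlt_le_dec 0 u) as [Hu|Hu].
  - split; [exact Hu|]. apply Rnot_le_lt; intros Hv. nra.
  - exfalso. assert (Hv : v < 0) by nra.
    assert ((u + v) ^ 2 <= (X - u - v) ^ 2) by nra.
    pose proof (pow2_ge_0 (u - v)). nra.
Qed.

Lemma chord_identity p q t :
  4 * (/4 - t*t) * (/4 - (t-p)*(t-p)) - (q*q - (/4 - t*t) - (/4 - (t-p)*(t-p))) ^ 2 =
  q*q * (1 - (p*p + q*q)) - 4 * (p*p + q*q) * ((t - p/2) * (t - p/2)).
Proof. field. Qed.

Section LensRate.
Variables p q : R.
Hypotheses (Hq : 0 < q) (Hpq : p*p + q*q < 1).

Lemma lens_rate_bounds : 0 <= lens_rate p q <= /2.
Proof.
  unfold lens_rate. assert (Hd0 : 0 < p*p + q*q) by nra.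
  set (d := sqrt (p*p + q*q)). set (w := sqrt (1 - (p*p + q*q))).
  assert (0 < d) by (apply sqrt_lt_R0; lra).
  assert (0 < w) by (apply sqrt_lt_R0; lra).
  assert (d * d = p*p + q*q) by (apply sqrt_sqrt; lra).
  assert (w * w = 1 - (p*p + q*q)) by (apply sqrt_sqrt; lra).
  assert (q <= d) by nra. assert (w <= 1) by nra.
  split.
  - apply Rmult_le_pos; [nra|]. apply Rlt_le, Rinv_0_lt_compat; lra.
  - apply (Rmult_le_reg_r (2 * d)); [lra|]. unfold Rdiv.
    rewrite Rmult_assoc, Rinv_l by lra. nra.
Qed.

Lemma lens_rate_iff t : Rabs (t - p/2) < lens_rate p q <->
  4 * (p*p + q*q) * ((t - p/2) * (t - p/2)) < q*q * (1 - (p*p + q*q)).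
Proof.
  assert (Hd0 : 0 < p*p + q*q) by nra.
  assert (E : lens_rate p q * lens_rate p q * (4 * (p*p + q*q)) = q*q * (1 - (p*p + q*q))).
  { unfold lens_rate.
    set (d := sqrt (p*p + q*q)). set (w := sqrt (1 - (p*p + q*q))).
    assert (0 < d) by (apply sqrt_lt_R0; lra).
    rewrite <- (sqrt_sqrt (1 - (p*p + q*q))) by lra. fold w.
    rewrite <- (sqrt_sqrt (p*p + q*q)) by lra. fold d.
    field. lra. }
  destruct lens_rate_bounds as [H0 _].
  rewrite <- E, <- (Rabs_right (lens_rate p q)) at 1 by lra.
  split; intros H.
  - apply Rsqr_lt_abs_1 in H. unfold Rsqr in H. nra.
  - apply Rsqr_lt_abs_0. unfold Rsqr. nra.
Qed.

Lemma partial_chords_iff t :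
  partial_overlap (half_chord t) (half_chord (t - p)) q <-> Rabs (t - p/2) < lens_rate p q.
Proof.
  rewrite lens_rate_iff.
  pose proof (chord_identity p q t) as E.
  rewrite partial_overlap_iff by (apply half_chord_nonneg || assumption).
  split; intros H.
  - assert (Hpos : 0 < half_chord t /\ 0 < half_chord (t - p)).
    { split; apply Rnot_le_lt; intros Hle;
        assert (half_chord _ = 0) as Z by (apply Rle_antisym; [exact Hle|apply half_chord_nonneg]);
        rewrite Z in H;
        match type of H with ?a ^ 2 < _ => pose proof (pow2_ge_0 a) end; lra. }
    destruct Hpos as [H1 H2].
    rewrite !half_chord_sq in H by (apply Rlt_le, half_chord_pos; assumption). lra.
  - destruct (heron_pos (q*q) (/4 - t*t) (/4 - (t-p)*(t-p))) as [Hu Hv]; [nra|lra|].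
    rewrite !half_chord_sq by lra. lra.
Qed.

End LensRate.

Lemma RInt_const_R (c a b : R) : RInt (fun _ => c) a b = (b - a) * c.
Proof. rewrite RInt_const. reflexivity. Qed.

Lemma RInt_zero_on (f : R -> R) a b :
  (forall t, Rmin a b < t < Rmax a b -> f t = 0) -> RInt f a b = 0.
Proof.
  intros H. rewrite (RInt_ext f (fun _ => 0)) by exact H.
  rewrite RInt_const_R. apply Rmult_0_r.
Qed.

Lemma RInt_split3 (f : R -> R) a b c d : a <= b <= c -> c <= d -> ex_RInt f a d ->
  RInt f a d = RInt f a b + RInt f b c + RInt f c d.
Proof.
  intros [Hab Hbc] Hcd Hex.
  assert (Ebd : ex_RInt f b d) by (apply (ex_RInt_Chasles_2 f a); auto; lra).
  assert (Eab : ex_RInt f a b) by (apply (ex_RInt_Chasles_1 f a b d); auto; lra).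
  assert (Ebc : ex_RInt f b c) by (apply (ex_RInt_Chasles_1 f b c d); auto; lra).
  assert (Ecd : ex_RInt f c d) by (apply (ex_RInt_Chasles_2 f b c d); auto; lra).
  rewrite <- (RInt_Chasles f a b d Eab Ebd), <- (RInt_Chasles f b c d Ebc Ecd).
  symmetry. apply Rplus_assoc.
Qed.

Lemma ex_RInt_sub (f : R -> R) a b c d : a <= b <= c -> c <= d -> ex_RInt f a d ->
  ex_RInt f b c.
Proof.
  intros [Hab Hbc] Hcd Hex. apply (ex_RInt_Chasles_1 f b c d); [lra|].
  apply (ex_RInt_Chasles_2 f a); auto; lra.
Qed.

Lemma RInt_le_of_support (f : R -> R) a b m r c : ex_RInt f a b ->
  a <= m - r -> m + r <= b -> 0 <= r ->
  (forall t, a <= t <= b -> f t <= c) ->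
  (forall t, a <= t <= b -> r <= Rabs (t - m) -> f t = 0) ->
  RInt f a b <= 2 * r * c.
Proof.
  intros Hex Ha Hb Hr Hc Hzero.
  assert (Hout : forall u v, a <= u <= v -> v <= b -> (v <= m - r \/ m + r <= u) ->
            RInt f u v = 0).
  { intros u v Huv Hv Hout. apply RInt_zero_on. intros t Ht.
    rewrite Rmin_left, Rmax_right in Ht by lra.
    apply Hzero; [lra|]. unfold Rabs; destruct Rcase_abs; lra. }
  rewrite (RInt_split3 f a (m - r) (m + r) b), (Hout a (m - r)), (Hout (m + r) b)
    by first [assumption | lra | left; lra | right; lra].
  assert (Hmid : RInt f (m - r) (m + r) <= RInt (fun _ => c) (m - r) (m + r)).
  { apply RInt_le; [lra|eapply ex_RInt_sub; eauto; lra|apply ex_RInt_const|].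
    intros; apply Hc; lra. }
  rewrite RInt_const_R in Hmid. lra.
Qed.

Lemma RInt_ge_of_plateau (f : R -> R) a b m r c : ex_RInt f a b ->
  a <= m - r -> m + r <= b -> 0 <= r ->
  (forall t, a <= t <= b -> 0 <= f t) ->
  (forall t, Rabs (t - m) < r -> f t = c) ->
  2 * r * c <= RInt f a b.
Proof.
  intros Hex Ha Hb Hr Hnonneg Hc.
  assert (Hpos : forall u v, a <= u <= v -> v <= b -> 0 <= RInt f u v).
  { intros u v Huv Hv. rewrite <- (Rmult_0_r (v - u)), <- RInt_const_R.
    apply RInt_le; [lra|apply ex_RInt_const|eapply ex_RInt_sub; eauto; lra|].
    intros; apply Hnonneg; lra. }
  rewrite (RInt_split3 f a (m - r) (m + r) b) by (assumption || lra).
  rewrite (RInt_ext f (fun _ => c) (m - r) (m + r)), RInt_const_R.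
  - pose proof (Hpos a (m - r)). pose proof (Hpos (m + r) b). nra.
  - intros t Ht. rewrite Rmin_left, Rmax_right in Ht by lra. apply Hc.
    unfold Rabs; destruct Rcase_abs; lra.
Qed.

Lemma RInt_shift (f : R -> R) a b c : ex_RInt f (a - c) (b - c) ->
  RInt (fun t => f (t - c)) a b = RInt f (a - c) (b - c).
Proof.
  intros H. pose proof (RInt_comp_lin f 1 (- c) a b) as E.
  replace (1 * a + - c) with (a - c) in E by ring.
  replace (1 * b + - c) with (b - c) in E by ring.
  rewrite <- E by exact H. apply RInt_ext. intros y _.
  unfold scal; simpl; unfold mult; simpl. rewrite Rmult_1_l. f_equal. ring.
Qed.

Lemma is_RInt_sumR n (f : nat -> R -> R) (I : nat -> R) a b :
  (forall k, (k < n)%nat -> is_RInt (f k) a b (I k)) ->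
  is_RInt (fun t => sumR n (fun k => f k t)) a b (sumR n I).
Proof.
  induction n as [|n IH]; intros H; simpl.
  - generalize (is_RInt_const (V := R_NormedModule) a b 0).
    unfold scal; simpl; unfold mult; simpl. now rewrite Rmult_0_r.
  - apply (is_RInt_plus (V := R_NormedModule)); [apply IH; intros|apply H]; auto.
Qed.

(** * The area of the intersection of two disks *)

Lemma continuous_Rmax_comp (f g : R -> R) x :
  continuous f x -> continuous g x -> continuous (fun t => Rmax (f t) (g t)) x.
Proof.
  intros Hf Hg. apply (continuous_ext (fun t => (f t + g t + Rabs (f t - g t)) * / 2)).
  { intros t. unfold Rmax, Rabs. destruct Rle_dec, Rcase_abs; lra. }
  apply (continuous_mult (fun t => f t + g t + Rabs (f t - g t))); [|apply continuous_const].
  apply (continuous_plus (fun t => f t + g t)); [now apply (continuous_plus f g)|].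
  apply continuous_Rabs_comp. now apply (continuous_minus f g).
Qed.

Lemma continuous_half_chord_comp (f : R -> R) x :
  continuous f x -> continuous (fun t => half_chord (f t)) x.
Proof.
  intros Hf. apply continuous_sqrt_comp.
  apply (continuous_minus (fun _ => /4)); [apply continuous_const|].
  now apply (continuous_mult f f).
Qed.

Lemma continuous_chord_overlap p q t : continuous (chord_overlap p q) t.
Proof.
  assert (H1 : continuous half_chord t) by (apply (continuous_half_chord_comp id), continuous_id).
  assert (H2 : continuous (fun t => half_chord (t - p)) t).
  { apply continuous_half_chord_comp, (continuous_minus id (fun _ => p));
      [apply continuous_id|apply continuous_const]. }
  apply (continuous_Rmax_comp (fun _ => 0)); [apply continuous_const|].
  apply (continuous_minus (fun t => half_chord t + half_chord (t - p))).
  - now apply (continuous_plus half_chord).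
  - apply (continuous_Rmax_comp _ (fun _ => Rabs q)); [|apply continuous_const].
    apply continuous_Rabs_comp. now apply (continuous_minus half_chord).
Qed.

Lemma ex_RInt_chord_overlap p q a b : ex_RInt (chord_overlap p q) a b.
Proof.
  apply (ex_RInt_continuous (V := R_CompleteNormedModule)).
  intros; apply continuous_chord_overlap.
Qed.

Lemma chord_overlap_outside p q t : /4 <= t * t -> chord_overlap p q t = 0.
Proof.
  intros H. unfold chord_overlap, half_chord at 1.
  rewrite sqrt_neg_0 by lra. apply centered_overlap_0_l, half_chord_nonneg.
Qed.

Lemma chord_overlap_disjoint p q t : 1 <= p*p + q*q -> chord_overlap p q t = 0.
Proof.
  intros Hd. unfold chord_overlap.
  pose proof (half_chord_nonneg t) as H1. pose proof (half_chord_nonneg (t - p)) as H2.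
  destruct (Rle_lt_dec (centered_overlap (half_chord t) (half_chord (t - p)) q) 0) as [Hle|Hlt].
  - apply Rle_antisym; [exact Hle|]. unfold centered_overlap. apply Rmax_l.
  - exfalso. destruct (centered_overlap_pos _ _ _ H1 H2 Hlt) as [y [Hy1 Hy2]].
    assert (0 < half_chord t /\ 0 < half_chord (t - p)) as [P1 P2] by lra.
    pose proof (half_chord_sq t (Rlt_le _ _ (half_chord_pos t P1))).
    pose proof (half_chord_sq (t - p) (Rlt_le _ _ (half_chord_pos (t - p) P2))).
    assert (y * y < /4 - t * t) by nra.
    assert ((y - q) * (y - q) < /4 - (t - p) * (t - p)) by nra.
    pose proof (pow2_ge_0 (t + (t - p))). pose proof (pow2_ge_0 (y + (y - q))). nra.
Qed.

Definition lens (p q : R) : R := RInt (chord_overlap p q) (-1) 1.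

Lemma lens_support p q a b : a <= -1 -> 1 <= b -> RInt (chord_overlap p q) a b = lens p q.
Proof.
  intros Ha Hb. unfold lens.
  rewrite (RInt_split3 _ a (-1) 1 b) by (apply ex_RInt_chord_overlap || lra).
  rewrite (RInt_zero_on _ a (-1)), (RInt_zero_on _ 1 b); [now rewrite Rplus_0_l, Rplus_0_r| |];
    intros t Ht; rewrite Rmin_left, Rmax_right in Ht by lra;
    apply chord_overlap_outside; nra.
Qed.

Lemma lens_disjoint p q : 1 <= p*p + q*q -> lens p q = 0.
Proof. intros H. apply RInt_zero_on. intros; now apply chord_overlap_disjoint. Qed.

Lemma lens_abs p q : lens p (Rabs q) = lens p q.
Proof.
  apply RInt_ext. intros t _. unfold chord_overlap. apply centered_overlap_abs.
Qed.

Lemma lens_minus p q1 q2 :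
  lens p q1 - lens p q2 = RInt (fun t => chord_overlap p q1 t - chord_overlap p q2 t) (-1) 1.
Proof.
  symmetry. apply (RInt_minus (V := R_CompleteNormedModule)); apply ex_RInt_chord_overlap.
Qed.

Lemma ex_RInt_chord_overlap_minus p q1 q2 :
  ex_RInt (fun t => chord_overlap p q1 t - chord_overlap p q2 t) (-1) 1.
Proof.
  apply (ex_RInt_minus (V := R_CompleteNormedModule)); apply ex_RInt_chord_overlap.
Qed.

Lemma lens_lipschitz p q1 q2 : Rabs (lens p q1 - lens p q2) <= 2 * Rabs (q1 - q2).
Proof.
  rewrite lens_minus. set (e := Rabs (q1 - q2)).
  assert (Hb : forall t, - e <= chord_overlap p q1 t - chord_overlap p q2 t <= e)
    by (intros; apply Rabs_le_inv, centered_overlap_lipschitz).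
  apply Rabs_le. split.
  - replace (- (2 * e)) with (RInt (fun _ => - e) (-1) 1) by (rewrite RInt_const_R; lra).
    apply RInt_le; [lra|apply ex_RInt_const|apply ex_RInt_chord_overlap_minus|intros; apply Hb].
  - replace (2 * e) with (RInt (fun _ => e) (-1) 1) by (rewrite RInt_const_R; lra).
    apply RInt_le; [lra|apply ex_RInt_chord_overlap_minus|apply ex_RInt_const|intros; apply Hb].
Qed.

(* The [q]-derivative of [chord_overlap p q t] is [-1] on the set where the chords
   partially overlap, an interval of radius [lens_rate p q] around [p / 2], and [0]
   elsewhere. *)
Lemma lens_increment_bounds p q1 q2 r R : 0 < q1 < q2 -> p*p + q2*q2 < 1 ->
  (forall q, q1 <= q <= q2 -> r <= lens_rate p q <= R) ->
  2 * r * (q2 - q1) <= lens p q1 - lens p q2 <= 2 * R * (q2 - q1).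
Proof.
  intros [Hq1 Hq12] Hd HrR.
  assert (Hp : -1 < p < 1) by (split; nra).
  assert (Hq : forall q, q1 <= q <= q2 -> 0 < q /\ p*p + q*q < 1) by (intros; split; nra).
  assert (Hrate : forall q, q1 <= q <= q2 -> 0 <= lens_rate p q <= /2)
    by (intros q Hq'; destruct (Hq q Hq'); now apply lens_rate_bounds).
  assert (Hdiff : forall t, 0 <= chord_overlap p q1 t - chord_overlap p q2 t <= q2 - q1)
    by (intros; apply centered_overlap_decr; lra).
  rewrite lens_minus. split.
  - set (r' := Rmax 0 r).
    assert (Hr' : 0 <= r' <= /2 /\ r' <= lens_rate p q1 /\ r' <= lens_rate p q2).
    { pose proof (HrR q1 ltac:(lra)). pose proof (HrR q2 ltac:(lra)).
      pose proof (Hrate q1 ltac:(lra)). pose proof (Hrate q2 ltac:(lra)).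
      unfold r', Rmax; destruct Rle_dec; lra. }
    apply Rle_trans with (2 * r' * (q2 - q1)).
    { apply Rmult_le_compat_r; [lra|]. unfold r'. pose proof (Rmax_r 0 r). lra. }
    apply (RInt_ge_of_plateau _ _ _ (p/2)); try lra.
    + apply ex_RInt_chord_overlap_minus.
    + intros; apply Hdiff.
    + intros t Ht. destruct (Hq q1), (Hq q2); try lra.
      apply centered_overlap_diff_partial; [lra| |]; apply partial_chords_iff; auto; lra.
  - set (R' := Rmin R (/2)).
    assert (HR' : 0 <= R' <= /2 /\ forall q, q1 <= q <= q2 -> lens_rate p q <= R').
    { pose proof (HrR q1 ltac:(lra)). pose proof (Hrate q1 ltac:(lra)).
      split; [unfold R', Rmin; destruct Rle_dec; lra|].
      intros q Hq'. pose proof (HrR q Hq'). pose proof (Hrate q Hq').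
      unfold R', Rmin; destruct Rle_dec; lra. }
    apply Rle_trans with (2 * R' * (q2 - q1)).
    2:{ apply Rmult_le_compat_r; [lra|]. unfold R'. pose proof (Rmin_l R (/2)). lra. }
    apply (RInt_le_of_support _ _ _ (p/2)); try lra.
    + apply ex_RInt_chord_overlap_minus.
    + intros; apply Hdiff.
    + intros t _ Ht.
      destruct (Rle_lt_dec (chord_overlap p q1 t - chord_overlap p q2 t) 0) as [Hle|Hlt].
      { pose proof (Hdiff t). lra. }
      destruct (centered_overlap_diff_pos _ _ q1 q2 (half_chord_nonneg t)
                  (half_chord_nonneg (t - p)) ltac:(lra) Hlt) as [q [Hqq Hpart]].
      apply partial_chords_iff in Hpart; [|lra|apply Hq; lra].
      pose proof (proj2 HR' q ltac:(lra)). lra.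
Qed.

Lemma derivable_pt_lim_of_increment_bounds (f g : R -> R) x d : 0 < d ->
  continuity_pt g x ->
  (forall y1 y2 m M, x - d < y1 < y2 -> y2 < x + d ->
     (forall y, y1 <= y <= y2 -> m <= g y <= M) ->
     m * (y2 - y1) <= f y2 - f y1 <= M * (y2 - y1)) ->
  derivable_pt_lim f x (g x).
Proof.
  intros Hd Hg Hinc eps Heps.
  destruct (Hg (eps / 2) ltac:(lra)) as [d' [Hd' Hclose]].
  assert (Hnear : forall y, Rabs (y - x) < d' -> g x - eps/2 <= g y <= g x + eps/2).
  { intros y Hy. destruct (Req_dec x y) as [<-|Hne]; [lra|].
    assert (Hgy : Rabs (g y - g x) < eps / 2) by (apply Hclose; repeat split; auto).
    apply Rabs_def2 in Hgy. lra. }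
  assert (Hdd : 0 < Rmin d d') by (apply Rmin_glb_lt; lra).
  exists (mkposreal _ Hdd). intros h Hh0 Hh. simpl in Hh.
  pose proof (Rmin_l d d') as Hmin1. pose proof (Rmin_r d d') as Hmin2.
  apply Rabs_def2 in Hh.
  assert (Hest : Rabs (f (x + h) - f x - g x * h) <= eps / 2 * Rabs h).
  { destruct (Rlt_le_dec 0 h) as [Hpos|Hneg].
    - destruct (Hinc x (x + h) (g x - eps/2) (g x + eps/2)) as [Hlo Hhi]; try lra.
      { intros y Hy. apply Hnear. apply Rabs_def1; lra. }
      rewrite (Rabs_right h) by lra. apply Rabs_le. split; nra.
    - assert (Hhneg : h < 0) by (destruct Hneg; [assumption|contradiction]).
      destruct (Hinc (x + h) x (g x - eps/2) (g x + eps/2)) as [Hlo Hhi]; try lra.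
      { intros y Hy. apply Hnear. apply Rabs_def1; lra. }
      rewrite (Rabs_left h) by lra. apply Rabs_le. split; nra. }
  assert (Habs : 0 < Rabs h) by (apply Rabs_pos_lt; exact Hh0).
  replace ((f (x + h) - f x) / h - g x) with ((f (x + h) - f x - g x * h) / h)
    by (field; exact Hh0).
  unfold Rdiv. rewrite Rabs_mult, Rabs_inv.
  apply Rle_lt_trans with (eps / 2 * Rabs h * / Rabs h).
  - apply Rmult_le_compat_r; [apply Rlt_le, Rinv_0_lt_compat|]; lra.
  - field_simplify; lra.
Qed.

Lemma continuity_pt_lens_rate p q : 0 < q -> p*p + q*q < 1 -> continuity_pt (lens_rate p) q.
Proof.
  intros Hq Hd. apply continuity_pt_filterlim.
  apply (ex_derive_continuous (K := R_AbsRing) (V := R_NormedModule)).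
  unfold lens_rate. auto_derive. repeat split; try nra.
  assert (0 < sqrt (p*p + q*q)) by (apply sqrt_lt_R0; nra). lra.
Qed.

Lemma lens_derive p q : 0 < q -> p*p + q*q < 1 ->
  derivable_pt_lim (lens p) q (-2 * lens_rate p q).
Proof.
  intros Hq Hd. set (qmax := sqrt (1 - p*p)).
  assert (Hqmax : q < qmax).
  { apply Rsqr_incrst_0; [|lra|apply sqrt_pos].
    unfold Rsqr, qmax. rewrite sqrt_sqrt; nra. }
  apply (derivable_pt_lim_of_increment_bounds _ (fun y => -2 * lens_rate p y) q
           (Rmin q (qmax - q))).
  - apply Rmin_glb_lt; lra.
  - apply continuity_pt_scal, continuity_pt_lens_rate; assumption.
  - intros y1 y2 m M Hy1 Hy2 HmM.
    pose proof (Rmin_l q (qmax - q)). pose proof (Rmin_r q (qmax - q)).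
    assert (Hy2d : p*p + y2*y2 < 1).
    { assert (y2 * y2 < qmax * qmax) by (apply Rmult_le_0_lt_compat; lra).
      unfold qmax in *. rewrite sqrt_sqrt in * by nra. lra. }
    destruct (lens_increment_bounds p y1 y2 (- M / 2) (- m / 2) ltac:(lra) Hy2d) as [H1 H2].
    + intros y Hy. specialize (HmM y Hy). lra.
    + split; lra.
Qed.

Definition lens_closed (p q : R) : R :=
  (acos (sqrt (p*p + q*q)) - sqrt (p*p + q*q) * sqrt (1 - (p*p + q*q))) / 2.

Lemma is_derive_acos x : -1 < x < 1 -> is_derive acos x (-1 / sqrt (1 - x * x)).
Proof.
  intros Hx. apply is_derive_Reals, (derive_pt_eq_1 _ _ _ (derivable_pt_acos x Hx)).
  now rewrite derive_pt_acos.
Qed.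

(* At [x >= 1] we use [acos y = atan (sqrt (1 - y^2) / y)], valid for all [y > 0]
   since [sqrt] vanishes on negative arguments. *)
Lemma continuous_acos x : -1 < x -> continuous acos x.
Proof.
  intros Hx. destruct (Rlt_le_dec x 1) as [Hx1|Hx1].
  - apply (ex_derive_continuous (V := R_NormedModule)).
    eexists. apply is_derive_acos. lra.
  - apply (continuous_ext_loc _ (fun y => atan (sqrt (1 - y²) / y))).
    + apply (filter_imp (fun y => 0 < y)); [intros y Hy; now rewrite acos_atan|].
      apply (open_gt 0). lra.
    + apply continuous_atan_comp, (continuous_mult (fun y => sqrt (1 - y²)) Rinv).
      * apply continuous_sqrt_comp, (continuous_minus (fun _ => 1)); [apply continuous_const|].
        apply (continuous_mult id id); apply continuous_id.
      * apply continuous_Rinv. lra.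
Qed.

Lemma continuous_lens_closed p q : continuous (lens_closed p) q.
Proof.
  assert (Hd : forall f : R -> R, continuous f q -> continuous (fun y => sqrt (f y)) q)
    by (intros; now apply continuous_sqrt_comp).
  assert (Hpq : continuous (fun y => p*p + y*y) q).
  { apply (continuous_plus (fun _ => p*p)); [apply continuous_const|].
    apply (continuous_mult id id); apply continuous_id. }
  assert (Hw : continuous (fun y => 1 - (p*p + y*y)) q)
    by (apply (continuous_minus (fun _ => 1)); [apply continuous_const|exact Hpq]).
  unfold lens_closed. apply (continuous_mult _ (fun _ => /2)); [|apply continuous_const].
  apply (continuous_minus (fun y => acos (sqrt (p*p + y*y)))).
  - apply (continuous_comp (fun y => sqrt (p*p + y*y)) acos); [now apply Hd|].
    apply continuous_acos. pose proof (sqrt_pos (p*p + q*q)). lra.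
  - apply (continuous_mult (fun y => sqrt (p*p + y*y))); now apply Hd.
Qed.

Lemma lens_closed_derive p q : 0 < q -> p*p + q*q < 1 ->
  is_derive (lens_closed p) q (-2 * lens_rate p q).
Proof.
  intros Hq Hd. assert (Hd0 : 0 < p*p + q*q) by nra.
  set (d := sqrt (p*p + q*q)). set (w := sqrt (1 - (p*p + q*q))).
  assert (0 < d) by (apply sqrt_lt_R0; lra).
  assert (0 < w) by (apply sqrt_lt_R0; lra).
  assert (Ed : d * d = p*p + q*q) by (apply sqrt_sqrt; lra).
  assert (Ew : w * w = 1 - (p*p + q*q)) by (apply sqrt_sqrt; lra).
  assert (HD : is_derive (fun y => sqrt (p*p + y*y)) q (q / d)).
  { auto_derive; [lra|]. fold d. field. lra. }
  assert (HW : is_derive (fun y => sqrt (1 - (p*p + y*y))) q (- q / w)).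
  { auto_derive; [lra|].
    replace (1 + - (p*p + q*q)) with (1 - (p*p + q*q)) by ring. fold w. field. lra. }
  assert (HA : is_derive (fun y => acos (sqrt (p*p + y*y))) q (q / d * (-1 / w))).
  { replace w with (sqrt (1 - d * d)) by (now rewrite Ed).
    apply (is_derive_comp acos (fun y => sqrt (p*p + y*y))); [|exact HD].
    apply is_derive_acos. nra. }
  assert (HP : is_derive (fun y => sqrt (p*p + y*y) * sqrt (1 - (p*p + y*y))) q
                 (q / d * w + d * (- q / w))).
  { apply (is_derive_mult (fun y => sqrt (p*p + y*y)) (fun y => sqrt (1 - (p*p + y*y))));
      [exact HD|exact HW|]. intros; apply Rmult_comm. }
  unfold lens_closed. eapply is_derive_ext.
  { intros y. unfold Rdiv. apply Rmult_comm. }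
  replace (-2 * lens_rate p q) with (scal (/ 2) (minus (q / d * (-1 / w))
    (q / d * w + d * (- q / w)))).
  - apply is_derive_scal, (is_derive_minus _ _ _ _ _ HA HP).
  - unfold scal, minus, plus, opp; simpl. unfold mult; simpl.
    unfold lens_rate. fold d w.
    replace (-1 / w) with (- (d * d + w * w) / w) by (f_equal; f_equal; lra).
    field. lra.
Qed.

Lemma continuous_lens p q : continuous (lens p) q.
Proof.
  apply continuity_pt_filterlim, continuity_pt_locally. intros eps.
  exists (mkposreal (eps / 2) ltac:(pose proof (cond_pos eps); lra)).
  intros y Hy. change (Rabs (y - q) < eps / 2) in Hy.
  pose proof (lens_lipschitz p y q). lra.
Qed.

(* [lens - lens_closed] has zero derivative on [(0, sqrt (1 - p^2))] and vanishes at
   the right end, where both disks touch. *)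
Lemma lens_eq_closed p q : p*p + q*q < 1 -> lens p q = lens_closed p q.
Proof.
  intros Hd. set (qmax := sqrt (1 - p*p)).
  assert (Hqmax : qmax * qmax = 1 - p*p) by (apply sqrt_sqrt; nra).
  assert (Hq : Rabs q < qmax).
  { apply Rsqr_incrst_0; [|apply Rabs_pos|apply sqrt_pos].
    rewrite <- Rsqr_abs. unfold Rsqr. lra. }
  set (Phi y := lens p y - lens_closed p y).
  assert (Hin : forall y, 0 < y < qmax -> 0 < y /\ p*p + y*y < 1).
  { intros y Hy. split; [lra|]. assert (y * y < qmax * qmax) by nra. lra. }
  assert (HPhi : forall y, 0 < y < qmax -> derivable_pt_lim Phi y 0).
  { intros y Hy. destruct (Hin y Hy). unfold Phi.
    replace 0 with (-2 * lens_rate p y - -2 * lens_rate p y) by ring.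
    apply derivable_pt_lim_minus; [now apply lens_derive|].
    now apply is_derive_Reals, lens_closed_derive. }
  assert (Hconst : forall y, 0 <= y <= qmax -> Phi y = Phi 0).
  { apply (null_derivative_loc Phi 0 qmax (fun y Hy => exist _ 0 (HPhi y Hy))).
    - intros y _. apply continuity_pt_filterlim.
      apply (continuous_minus (lens p) (lens_closed p));
        [apply continuous_lens|apply continuous_lens_closed].
    - intros y Hy. apply derive_pt_eq_0, HPhi, Hy. }
  assert (Hend : Phi qmax = 0).
  { unfold Phi. rewrite lens_disjoint by lra. unfold lens_closed.
    replace (p*p + qmax*qmax) with 1 by lra.
    rewrite sqrt_1, acos_1, Rminus_diag, sqrt_0. field. }
  rewrite <- lens_abs.
  replace (lens_closed p q) with (lens_closed p (Rabs q))
    by (unfold lens_closed; rewrite <- Rabs_mult, (Rabs_pos_eq (q * q)) by nra; reflexivity).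
  assert (Phi (Rabs q) = 0).
  { pose proof (Rabs_pos q). rewrite Hconst, <- (Hconst qmax); lra. }
  unfold Phi in *. lra.
Qed.

Lemma lens_eq_hat p q : lens p q = PI / 4 * euclid_hat (sqrt (p*p + q*q)).
Proof.
  pose proof PI_RGT_0. set (d := sqrt (p*p + q*q)).
  assert (Ed : d * d = p*p + q*q) by (apply sqrt_sqrt; nra).
  assert (0 <= d) by apply sqrt_pos.
  unfold euclid_hat. destruct (Rle_dec d 1) as [Hd1|Hd1].
  - destruct (Rlt_le_dec (p*p + q*q) 1) as [Hlt|Hge].
    + rewrite lens_eq_closed by exact Hlt. unfold lens_closed. fold d.
      replace (d ^ 2) with (p*p + q*q) by (rewrite <- Ed; ring). field. lra.
    + assert (d = 1) as -> by nra.
      rewrite lens_disjoint, acos_1 by exact Hge.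
      replace (1 - 1 ^ 2) with 0 by ring. rewrite sqrt_0. ring.
  - rewrite lens_disjoint by nra. ring.
Qed.

(** * The hat form *)

Definition chord_meet (x : nat -> R * R) (i j : nat) (t : R) : R :=
  overlap (snd (x i) - half_chord (t - fst (x i))) (snd (x i) + half_chord (t - fst (x i)))
          (snd (x j) - half_chord (t - fst (x j))) (snd (x j) + half_chord (t - fst (x j))).

Definition hat_form (n : nat) (s : nat -> R) (x : nat -> R * R) : R :=
  sumR n (fun i => sumR n (fun j => s i * s j * euclid_hat (dist2 (x i) (x j)))).

Lemma chord_meet_shift x i j t : chord_meet x i j t =
  chord_overlap (fst (x j) - fst (x i)) (snd (x j) - snd (x i)) (t - fst (x i)).
Proof.
  unfold chord_meet, chord_overlap.
  rewrite overlap_centered by apply half_chord_nonneg.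
  do 2 f_equal. ring.
Qed.

Lemma dist2_sym a b : dist2 a b = dist2 b a.
Proof. unfold dist2. f_equal. ring. Qed.

Lemma dist2_diag a : dist2 a a = 0.
Proof. unfold dist2. rewrite <- sqrt_0. f_equal. ring. Qed.

Lemma euclid_hat_0 : euclid_hat 0 = 1.
Proof.
  unfold euclid_hat. destruct (Rle_dec 0 1); [|lra].
  rewrite acos_0. pose proof PI_RGT_0. field. lra.
Qed.

Lemma is_RInt_chord_meet x i j M : 1 + Rabs (fst (x i)) <= M ->
  is_RInt (chord_meet x i j) (-M) M (PI / 4 * euclid_hat (dist2 (x i) (x j))).
Proof.
  intros HM. set (a := fst (x i)) in *.
  set (p := fst (x j) - a). set (q := snd (x j) - snd (x i)).
  assert (Hex : ex_RInt (chord_meet x i j) (-M) M).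
  { apply (ex_RInt_continuous (V := R_CompleteNormedModule)). intros z _.
    apply (continuous_ext (fun t => chord_overlap p q (t - a))).
    { intros; now rewrite chord_meet_shift. }
    apply (continuous_comp (fun t => t - a) (chord_overlap p q)).
    - apply (continuous_minus id (fun _ => a)); [apply continuous_id|apply continuous_const].
    - apply continuous_chord_overlap. }
  replace (PI / 4 * euclid_hat (dist2 (x i) (x j))) with (RInt (chord_meet x i j) (-M) M).
  { now apply (RInt_correct (V := R_CompleteNormedModule)). }
  rewrite (RInt_ext _ (fun t => chord_overlap p q (t - a)))
    by (intros; apply chord_meet_shift).
  pose proof (Rle_abs a). pose proof (Rle_abs (- a)). rewrite Rabs_Ropp in *.
  rewrite RInt_shift by apply ex_RInt_chord_overlap.
  rewrite lens_support by lra. rewrite lens_eq_hat.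
  do 3 f_equal. rewrite dist2_sym. unfold dist2, p, q, a. f_equal. ring.
Qed.

Lemma is_RInt_scal_R (f : R -> R) a b k l :
  is_RInt f a b l -> is_RInt (fun t => k * f t) a b (k * l).
Proof. apply (is_RInt_scal (V := R_NormedModule)). Qed.

Lemma sumR_le_hat_form n s x : spins n s -> sumR n s <= hat_form n s x.
Proof.
  intros Hs. set (M := 1 + sumR n (fun i => Rabs (fst (x i)))).
  assert (HM : forall i, (i < n)%nat -> 1 + Rabs (fst (x i)) <= M).
  { intros i Hi. pose proof (sumR_term_le n (fun i => Rabs (fst (x i))) i
      ltac:(intros; apply Rabs_pos) Hi). unfold M. lra. }
  assert (HMM : - M <= M).
  { pose proof (sumR_nonneg n (fun i => Rabs (fst (x i))) ltac:(intros; apply Rabs_pos)).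
    unfold M. lra. }
  assert (Hdiag : is_RInt (fun t => sumR n (fun i => s i * chord_meet x i i t)) (-M) M
                    (sumR n (fun i => s i * (PI / 4 * euclid_hat (dist2 (x i) (x i)))))).
  { apply is_RInt_sumR. intros i Hi. now apply is_RInt_scal_R, is_RInt_chord_meet, HM. }
  assert (Hfull : is_RInt
                    (fun t => sumR n (fun i => sumR n (fun j => s i * s j * chord_meet x i j t)))
                    (-M) M
                    (sumR n (fun i => sumR n (fun j =>
                       s i * s j * (PI / 4 * euclid_hat (dist2 (x i) (x j))))))).
  { apply is_RInt_sumR. intros i Hi. apply is_RInt_sumR. intros j Hj.
    now apply is_RInt_scal_R, is_RInt_chord_meet, HM. }
  pose proof (is_RInt_le _ _ _ _ _ _ HMM Hdiag Hfull) as Hle.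
  rewrite (sumR_ext n _ (fun i => PI / 4 * s i)) in Hle
    by (intros; rewrite dist2_diag, euclid_hat_0; ring).
  rewrite (sumR_ext n (fun i => sumR n _)
    (fun i => PI / 4 * sumR n (fun j => s i * s j * euclid_hat (dist2 (x i) (x j))))) in Hle.
  2:{ intros. rewrite <- sumR_scal. apply sumR_ext; intros; ring. }
  rewrite !sumR_scal in Hle. pose proof PI_RGT_0.
  apply (Rmult_le_reg_l (PI / 4)); [lra|]. apply Hle. intros t _.
  rewrite (sumR_ext n _ (fun i => s i * len
    (snd (x i) - half_chord (t - fst (x i))) (snd (x i) + half_chord (t - fst (x i))))).
  - apply (signed_length_le_overlap n s _ _ Hs).
  - intros i _. unfold chord_meet, overlap. now rewrite Rmax_left, Rmin_left by lra.
Qed.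

Lemma hat_form_opp n s x : hat_form n (fun i => - s i) x = hat_form n s x.
Proof. apply sumR_ext; intros. apply sumR_ext; intros. ring. Qed.

Lemma Rabs_sumR_le_hat_form n s x : spins n s -> Rabs (sumR n s) <= hat_form n s x.
Proof.
  intros Hs. pose proof (sumR_le_hat_form n s x Hs) as Hpos.
  pose proof (sumR_le_hat_form n _ x (spins_opp n s Hs)) as Hneg.
  rewrite sumR_opp, hat_form_opp in Hneg.
  unfold Rabs; destruct Rcase_abs; lra.
Qed.

Lemma hat_form_eq_U n s x : spins n s -> hat_form n s x = 2 * U euclid_hat n s x + INR n.
Proof.
  intros Hs. unfold hat_form, U. rewrite sumR_square_sym.
  - f_equal. rewrite <- (Rmult_1_r (INR n)), <- sumR_const. apply sumR_ext; intros i Hi.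
    rewrite dist2_diag, euclid_hat_0. destruct (Hs i Hi) as [-> | ->]; ring.
  - intros i j. rewrite dist2_sym. ring.
Qed.

Lemma hat_form_coincident n s x : (forall i j, (i < n)%nat -> (j < n)%nat -> x i = x j) ->
  hat_form n s x = sumR n s * sumR n s.
Proof.
  intros Hx. unfold hat_form. rewrite sumR_mult_sumR.
  apply sumR_ext; intros i Hi. apply sumR_ext; intros j Hj.
  rewrite (Hx i j Hi Hj), dist2_diag, euclid_hat_0. ring.
Qed.

Lemma U_hat_lower_bound n s x : spins n s ->
  Rabs (sumR n s) - INR n <= 2 * U euclid_hat n s x.
Proof.
  intros Hs. pose proof (Rabs_sumR_le_hat_form n s x Hs) as H.
  rewrite hat_form_eq_U in H by exact Hs. lra.
Qed.

Lemma U_hat_coincident n s x : spins n s ->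
  (forall i j, (i < n)%nat -> (j < n)%nat -> x i = x j) ->
  2 * U euclid_hat n s x = sumR n s * sumR n s - INR n.
Proof.
  intros Hs Hx. pose proof (hat_form_eq_U n s x Hs) as H.
  rewrite hat_form_coincident in H by exact Hx. lra.
Qed.

Lemma spins_sumR_abs_ge_1 n s : spins n s -> sumR n s <> 0 -> 1 <= Rabs (sumR n s).
Proof.
  intros Hs Hnz. destruct (spins_sumR_IZR n s Hs) as [z Hz]. rewrite Hz in *.
  assert (z <> 0%Z) by (intros ->; now apply Hnz).
  rewrite <- abs_IZR. apply IZR_le. lia.
Qed.

Lemma INR_ge_2 n : (2 <= n)%nat -> 2 <= INR n.
Proof. intros Hn. replace 2 with (INR 2) by (simpl; ring). now apply le_INR. Qed.

Lemma Rle_div_of_mult_le c a b : 0 < b -> c * b <= a -> c <= a / b.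
Proof.
  intros Hb H. apply (Rmult_le_reg_r b); [exact Hb|].
  unfold Rdiv. rewrite Rmult_assoc, Rinv_l, Rmult_1_r by lra. exact H.
Qed.

Lemma is_inf_min (S : R -> Prop) m : S m -> (forall y, S y -> m <= y) -> is_inf S m.
Proof. intros Hm Hlow. split; [exact Hlow|]. intros m' Hm'. now apply Hm'. Qed.

Lemma U_hat_balanced_coincident n s x : (2 <= n)%nat -> spins n s -> sumR n s = 0 ->
  (forall i j, (i < n)%nat -> (j < n)%nat -> x i = x j) ->
  U euclid_hat n s x / INR n = -1/2.
Proof.
  intros Hn Hs Hsum Hx. pose proof (U_hat_coincident n s x Hs Hx) as H.
  pose proof (INR_ge_2 n Hn). rewrite Hsum in H.
  replace (U euclid_hat n s x) with (-1/2 * INR n) by lra. field. lra.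
Qed.

Lemma U_hat_unit_charge_coincident n s x : (2 <= n)%nat -> spins n s ->
  Rabs (sumR n s) = 1 -> (forall i j, (i < n)%nat -> (j < n)%nat -> x i = x j) ->
  U euclid_hat n s x / (INR n - 1) = -1/2.
Proof.
  intros Hn Hs Hsum Hx. pose proof (U_hat_coincident n s x Hs Hx) as H.
  pose proof (INR_ge_2 n Hn).
  assert (Hsq : sumR n s * sumR n s = 1).
  { change (Rsqr (sumR n s) = 1). rewrite Rsqr_abs, Hsum. apply Rmult_1_r. }
  replace (U euclid_hat n s x) with (-1/2 * (INR n - 1)) by lra. field. lra.
Qed.

Lemma energy_set_hat_inf : is_inf (energy_set euclid_hat) (-1/2).
Proof.
  apply is_inf_min.
  - set (s i := match i with O => 1 | _ => -1 end).
    assert (Hs : spins 2 s) by (intros [|i] _; [left|right]; reflexivity).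
    exists 2%nat, s, (fun _ => (0, 0)). repeat split; [lia|exact Hs|].
    symmetry. apply U_hat_balanced_coincident; auto. unfold s. simpl. ring.
  - intros y [n [s [x [Hn [Hs ->]]]]].
    pose proof (U_hat_lower_bound n s x Hs). pose proof (Rabs_pos (sumR n s)).
    pose proof (INR_ge_2 n Hn). apply Rle_div_of_mult_le; lra.
Qed.

Lemma mod_energy_set_hat_inf : is_inf (mod_energy_set euclid_hat) (-1/2).
Proof.
  apply is_inf_min.
  - set (s i := match i with 1%nat => -1 | _ => 1 end).
    assert (Hs : spins 3 s) by (intros [|[|i]] _; [left|right|left]; reflexivity).
    assert (Hsum : sumR 3 s = 1) by (unfold s; simpl; ring).
    exists 3%nat, s, (fun _ => (0, 0)). repeat split; [lia|exact Hs|lra|].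
    symmetry. apply U_hat_unit_charge_coincident; auto. rewrite Hsum. apply Rabs_R1.
  - intros y [n [s [x [Hn [Hs [Hnz ->]]]]]].
    pose proof (U_hat_lower_bound n s x Hs). pose proof (spins_sumR_abs_ge_1 n s Hs Hnz).
    pose proof (INR_ge_2 n Hn). apply Rle_div_of_mult_le; lra.
Qed.

Theorem corollary2p7 :
  is_inf (energy_set euclid_hat) (-1/2) /\
  is_inf (mod_energy_set euclid_hat) (-1/2) /\
  (forall n sigma (x : nat -> R * R), (2 <= n)%nat -> Nat.Even n -> spins n sigma ->
     sumR n sigma = 0 -> (forall i j, (i < n)%nat -> (j < n)%nat -> x i = x j) ->
     U euclid_hat n sigma x / INR n = -1/2) /\
  (forall n sigma (x : nat -> R * R), (2 <= n)%nat -> Nat.Odd n -> spins n sigma ->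
     Rabs (sumR n sigma) = 1 -> (forall i j, (i < n)%nat -> (j < n)%nat -> x i = x j) ->
     U euclid_hat n sigma x / (INR n - 1) = -1/2).
Proof.
  split; [exact energy_set_hat_inf|].
  split; [exact mod_energy_set_hat_inf|].
  split.
  - intros n s x Hn _. exact (U_hat_balanced_coincident n s x Hn).
  - intros n s x Hn _. exact (U_hat_unit_charge_coincident n s x Hn).
Qed.
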